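(* Let $n\ge3$ and let $L^B$ be a blow-up of $L\cong\mathbf{2}^n$ with atoms $q_1,\dots,q_n$. Then $G(L^B)^{**}$ is the disjoint union $$G(L^B)^{**}=H+K_{|[q_1]|}+K_{|[q_2]|}+\cdots+K_{|[q_n]|},$$ where, for each $i$, $K_{|[q_i]|}$ is the complete graph on the vertex set $[q_i]$, and $H$ is the subgraph induced on $V(G(L^B))\setminus\bigcup_{i}[q_i]$, which is connected.
   Context: Blow-up: for $L\cong\mathbf{2}^n$ with atoms $q_1,\dots,q_n$, replace each $a\in L\setminus\{0,1\}$ by a finite chain $C_a$: $a=a^1\lessdot\cdots\lessdot a^{k_a}$ ($k_a\ge1$), keep $0,1$; elements of one chain are ordered along it, and for $u\in C_a,v\in C_b$ with $a\ne b$ ($C_0=\{0\},C_1=\{1\}$), $u\le v$ iff $a<b$ in $L$. $G(L^B)$ is the zero-divisor graph of $L^B$ (vertices: nonzero elements with a nonzero element meeting them in $0$; adjacency: meet $=0$). For $x\in L^B$, $x^\perp=\{z:x\wedge z=0\}$, $[x]=\{y: y^\perp=x^\perp\}$ (so $[q_i]$ is the chain $C_{q_i}$), and classes are ordered by $[a]\le[b]$ iff $b^\perp\subseteq a^\perp$, with $[a]\wedge[b]=[a\wedge b]$. The graph $G(L^B)^{**}$ has vertex set $V(G(L^B))$, distinct $x,y$ adjacent iff either $[x]=[y]$, or $[x]\wedge[y]\ne[0]$ and $[x],[y]$ are incomparable. ''$+$'' denotes disjoint union of graphs. *)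

From mathcomp Require Import all_boot.
From Stdlib Require Import Relations.
Set Implicit Arguments. Unset Strict Implicit. Unset Printing Implicit Defensive.

(* Base lattice L = 2^n, elements = subsets of 'I_n; 0 = set0, 1 = setT,
   atoms q_i = [set i].  Blow-up data: k a = length k_a of the chain C_a
   replacing a (only meaningful for a <> 0,1; for 0,1 the chain has length 1). *)
Section Blowup.
Variables (n : nat) (k : {set 'I_n} -> nat).

Definition klen (a : {set 'I_n}) : nat :=
  if (a == set0) || (a == setT) then 1 else k a.

(* Element (a, j) is the (j+1)-th element a^(j+1) of the chain C_a. *)
Definition blowup := {x : {set 'I_n} * nat | x.2 < klen x.1}.

Definition bzero : {set 'I_n} * nat := (set0, 0).

Definition ble (u v : blowup) : Prop :=
  ((val u).1 = (val v).1 /\ (val u).2 <= (val v).2) \/ ((val u).1 \proper (val v).1).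

Definition bmeet (u v : blowup) : {set 'I_n} * nat :=
  let a := (val u).1 in let b := (val v).1 in
  if a == b then (a, minn (val u).2 (val v).2)
  else if a \proper b then val u
  else if b \proper a then val v
  else (a :&: b, (klen (a :&: b)).-1).

Definition perp (x z : blowup) : Prop := bmeet x z = bzero.

Definition sameclass (x y : blowup) : Prop := forall z, perp x z <-> perp y z.

Definition cle (x y : blowup) : Prop := forall z, perp y z -> perp x z.

(* [x] /\ [y] = [x /\ y] <> [0] *)
Definition cmeet_nonzero (x y : blowup) : Prop :=
  exists m : blowup, val m = bmeet x y /\
    exists o : blowup, val o = bzero /\ ~ sameclass m o.

Definition isV (x : blowup) : Prop :=
  val x <> bzero /\ exists z : blowup, val z <> bzero /\ perp x z.

Definition adj2 (x y : blowup) : Prop :=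
  isV x /\ isV y /\ x <> y /\
  (sameclass x y \/ (cmeet_nonzero x y /\ ~ cle x y /\ ~ cle y x)).

Definition inQ (i : 'I_n) (y : blowup) : Prop :=
  exists u : blowup, val u = ([set i], 0) /\ sameclass y u.

Definition inH (x : blowup) : Prop := isV x /\ forall i, ~ inQ i x.

Definition adjH (x y : blowup) : Prop := inH x /\ inH y /\ adj2 x y.

End Blowup.

From mathcomp Require Import all_boot.
From Stdlib Require Import Relations Setoid.

(* Whether x meets z in 0 depends only on the subsets a, b of L underlying x and z: it
   holds iff a and b are disjoint.  Probing with the atoms q_j shows that [x] is determined
   by a and that [x] <= [y] iff a is contained in b, so outside the classes two vertices of
   G(L^B)^** are adjacent iff their subsets overlap (meet but are incomparable).  A
   singleton {i} overlaps nothing, which isolates the cliques [q_i].  Any other vertex x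
   overlaps a pair {i, j} with i in x and j not in x, and two pairs are joined through
   pairs sharing an element (n >= 3 keeps pairs below the top), so H is connected. *)

Set Implicit Arguments.
Unset Strict Implicit.
Unset Printing Implicit Defensive.

Section Overlap.
Variable T : finType.
Implicit Types (A B : {set T}) (i j l : T).

Definition overlap A B : bool :=
  [&& ~~ [disjoint A & B], ~~ (A \subset B) & ~~ (B \subset A)].

Lemma overlapP A B :
  reflect (~~ [disjoint A & B] /\ ~ A \subset B /\ ~ B \subset A) (overlap A B).
Proof. by apply: (iffP and3P) => [[? /negP ? /negP ?] | [? [/negP ? /negP ?]]]. Qed.

Lemma overlapC A B : overlap A B = overlap B A.
Proof. by rewrite /overlap disjoint_sym [~~ (B \subset A) && _]andbC. Qed.

Lemma overlap_set1 i B : ~~ overlap [set i] B.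
Proof. by rewrite /overlap disjoints1 sub1set; case: (i \in B). Qed.

Lemma overlap_pair A i j :
  i \in A -> j \notin A -> (forall l, A != [set l]) -> overlap A [set i; j].
Proof.
move=> iA jNA Anot1; apply/and3P; split.
- by apply/negP => /disjointFl/(_ (setU11 _ _)); rewrite iA.
- apply: contra (Anot1 i) => /subsetP sA; rewrite eqEsubset sub1set iA andbT.
  apply/subsetP => y yA; move: (sA y yA); rewrite !inE.
  by case/orP => // /eqP yj; move: jNA; rewrite -yj yA.
- by apply/subsetPn; exists j; rewrite ?inE ?eqxx ?orbT.
Qed.

Lemma overlap_pairs i j l :
  i != j -> i != l -> j != l -> overlap [set i; j] [set i; l].
Proof.
move=> ij il jl; apply: overlap_pair; rewrite ?inE ?eqxx //.
- by rewrite negb_or eq_sym il eq_sym jl.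
- move=> m; apply: contraNneq ij => /setP ijm.
  have := ijm i; have := ijm j; rewrite !inE !eqxx orbT => /esym/eqP jm /esym/eqP im.
  by rewrite im jm.
Qed.

End Overlap.

Section BlowupGraph.
Variables (n : nat) (k : {set 'I_n} -> nat).
Hypothesis k_gt0 : forall a : {set 'I_n}, a != set0 -> a != setT -> 0 < k a.
Implicit Types (x y z : blowup k) (a : {set 'I_n}) (i j : 'I_n).

Lemma klen_gt0 a : 0 < klen k a.
Proof. by rewrite /klen; case: ifP => // /norP[a0 aT]; apply: k_gt0. Qed.

Definition chain_bot a : blowup k := exist _ (a, 0) (klen_gt0 a).

Lemma bzeroE x : val x = bzero n <-> (val x).1 = set0.
Proof.
split=> [-> // | x0]; case: x x0 => [[a j] /= ltj] a0; subst a.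
by move: ltj; rewrite /klen eqxx /=; case: j.
Qed.

Lemma bmeet_fst x y : (bmeet x y).1 = (val x).1 :&: (val y).1.
Proof.
rewrite /bmeet; case: eqP => [-> | _]; first by rewrite setIid.
case: ifP => [/proper_sub/setIidPl -> // | _].
by case: ifP => [/proper_sub/setIidPr -> // | _].
Qed.

Lemma bmeet_snd_lt x y : (bmeet x y).2 < klen k (bmeet x y).1.
Proof.
rewrite /bmeet; case: eqP => _ /=.
  exact: leq_ltn_trans (geq_minl _ _) (valP x).
case: ifP => _; first exact: (valP x).
by case: ifP => _ /=; [exact: (valP y) | rewrite prednK // klen_gt0].
Qed.

Definition meet x y : blowup k := exist _ (bmeet x y) (bmeet_snd_lt x y).

Lemma perpE x z : perp x z <-> [disjoint (val x).1 & (val z).1].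
Proof.
rewrite /perp -setI_eq0 -bmeet_fst -[bmeet x z]/(val (meet x z)) bzeroE.
by split=> [-> | /eqP].
Qed.

Lemma perp_set1 x i : perp x (chain_bot [set i]) <-> i \notin (val x).1.
Proof. by rewrite perpE disjoint_sym disjoints1. Qed.

Lemma cleE x y : cle x y <-> (val x).1 \subset (val y).1.
Proof.
split=> [xy | /disjointWl xy z /perpE/xy/perpE //].
apply/subsetP => i; apply: contraLR => /perp_set1/xy.
by rewrite perp_set1.
Qed.

Lemma sameclassE x y : sameclass x y <-> (val x).1 = (val y).1.
Proof.
split=> [xy | xy z]; last by rewrite !perpE xy.
by apply/eqP; rewrite eqEsubset; apply/andP; split; apply/cleE => z /xy.
Qed.

Lemma cmeet_nonzeroE x y : cmeet_nonzero x y <-> ~~ [disjoint (val x).1 & (val y).1].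
Proof.
rewrite -setI_eq0 -bmeet_fst; split.
  case=> m [mE [o [oE mo]]]; apply/negP => /eqP m0; apply: mo.
  by apply/sameclassE; rewrite mE oE.
move=> m0; exists (meet x y); split=> //; exists (chain_bot set0); split=> //.
by move/sameclassE => /= /eqP; apply/negP.
Qed.

Lemma isVE x : isV x <-> (val x).1 != set0 /\ (val x).1 != setT.
Proof.
split=> [[x0 [z [z0 /perpE/disjoint_setI0 xz]]] | [x0 xT]].
  split; first by apply/eqP => /bzeroE.
  apply/eqP => xT; apply: z0; apply/bzeroE.
  by rewrite -xz xT setTI.
split; first by move/bzeroE/eqP; apply/negP.
have /subsetPn[j _ jNx] : ~~ (setT \subset (val x).1) by rewrite subTset.
exists (chain_bot [set j]); split; last exact/perp_set1.
by move/bzeroE/setP/(_ j); rewrite !inE eqxx.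
Qed.

Lemma inQE i y : inQ i y <-> (val y).1 = [set i].
Proof.
split=> [[u [uE /sameclassE ->]] | yi]; first by rewrite uE.
by exists (chain_bot [set i]); split=> //; apply/sameclassE.
Qed.

Lemma adj2E x y :
  adj2 x y <-> isV x /\ isV y /\ x <> y /\
    ((val x).1 = (val y).1 \/ overlap (val x).1 (val y).1).
Proof.
by rewrite /adj2 sameclassE cmeet_nonzeroE !cleE (rwP (overlapP _ _)).
Qed.

Lemma inQ_isV i y : 1 < n -> inQ i y -> isV y.
Proof.
move=> n_gt1 /inQE yi; apply/isVE; rewrite yi; split.
  by apply/set0Pn; exists i; rewrite inE.
apply: contraTneq n_gt1 => /(congr1 (fun A : {set _} => #|A|)).
by rewrite cards1 cardsT card_ord => <-.
Qed.

Lemma inQ_inj i j y : inQ i y -> inQ j y -> i = j.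
Proof.
by move=> /inQE yi /inQE; rewrite yi => /setP/(_ i); rewrite !inE eqxx => /esym/eqP.
Qed.

Lemma inQ_adj2 i x y : 1 < n -> inQ i x -> inQ i y -> x <> y -> adj2 x y.
Proof.
move=> n_gt1 xi yi xy; apply/adj2E.
split; first exact: inQ_isV xi.
split; first exact: inQ_isV yi.
by split=> //; left; move/inQE: xi => ->; move/inQE: yi => ->.
Qed.

Lemma adj2_inQ x y i : adj2 x y -> inQ i x <-> inQ i y.
Proof.
move=> /adj2E[_ [_ [_ [xy | ov]]]]; first by rewrite !inQE xy.
rewrite !inQE; split=> [xi | yi]; move: ov; rewrite ?xi ?yi.
  by rewrite (negbTE (overlap_set1 _ _)).
by rewrite overlapC (negbTE (overlap_set1 _ _)).
Qed.

Lemma inHE x : inH x <-> isV x /\ forall i, (val x).1 != [set i].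
Proof.
split=> [[xV xQ] | [xV x1]]; split=> // i.
  by apply/eqP => /inQE; apply: xQ.
by move/inQE/eqP; apply/negP.
Qed.

Lemma inH_pair i j : 2 < n -> i != j -> inH (chain_bot [set i; j]).
Proof.
move=> n_gt2 ij; apply/inHE; split.
  apply/isVE; split; first by apply/set0Pn; exists i; rewrite !inE eqxx.
  apply: contraTneq n_gt2 => /(congr1 (fun A : {set _} => #|A|)).
  by rewrite cards2 ij cardsT card_ord => <-.
move=> l /=; apply/negP => /eqP/(congr1 (fun A : {set _} => #|A|)).
by rewrite cards2 ij cards1.
Qed.

Lemma adjH_overlap x y : inH x -> inH y -> overlap (val x).1 (val y).1 -> adjH x y.
Proof.
move=> xH yH ov; do 2!split=> //; apply/adj2E.
split; first by case: xH.
split; first by case: yH.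
split; last by right.
by move=> xy; move: ov; rewrite xy /overlap subxx /= andbF.
Qed.

Lemma pair_path i j l : 2 < n -> i != j -> i != l ->
  clos_refl_trans _ (@adjH n k) (chain_bot [set i; j]) (chain_bot [set i; l]).
Proof.
move=> n_gt2 ij il; have [<- | jl] := eqVneq j l; first exact: rt_refl.
apply: rt_step; apply: adjH_overlap; [exact: inH_pair | exact: inH_pair |].
exact: overlap_pairs.
Qed.

Lemma pairs_connected i j i' j' : 2 < n -> i != j -> i' != j' ->
  clos_refl_trans _ (@adjH n k) (chain_bot [set i; j]) (chain_bot [set i'; j']).
Proof.
move=> n_gt2 ij; case: (eqVneq i i') => [<- | ii'] ij'; first exact: pair_path.
apply: rt_trans (pair_path n_gt2 ij ii') _.
by rewrite setUC; apply: pair_path; rewrite // eq_sym.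
Qed.

Lemma inH_linked x : 2 < n -> inH x ->
  exists i j, [/\ i != j, adjH x (chain_bot [set i; j]) & adjH (chain_bot [set i; j]) x].
Proof.
move=> n_gt2 /[dup] xH /inHE[/isVE[/set0Pn[i ix] xT] x1].
have /subsetPn[j _ jNx] : ~~ (setT \subset (val x).1) by rewrite subTset.
have ij : i != j by apply: contraNneq jNx => <-.
have ov := overlap_pair ix jNx x1.
have pH := inH_pair n_gt2 ij.
by exists i, j; split=> //; apply: adjH_overlap; rewrite // overlapC.
Qed.

Lemma inH_connected x y : 2 < n -> inH x -> inH y -> clos_refl_trans _ (@adjH n k) x y.
Proof.
move=> n_gt2 /(inH_linked n_gt2)[i [j [ij xp _]]] /(inH_linked n_gt2)[i' [j' [ij' _ py]]].
apply: rt_trans (rt_step _ _ _ _ xp) _.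
exact: rt_trans (pairs_connected n_gt2 ij ij') (rt_step _ _ _ _ py).
Qed.

End BlowupGraph.

Theorem mainTheorem7 (n : nat) (k : {set 'I_n} -> nat)
  (hn : 3 <= n)
  (hk : forall a : {set 'I_n}, a != set0 -> a != setT -> 0 < k a) :
  (* each [q_i] is a set of vertices of G(L^B)^**, and the [q_i] are pairwise disjoint *)
  (forall i (y : blowup k), inQ i y -> isV y) /\
  (forall i j (y : blowup k), inQ i y -> inQ j y -> i = j) /\
  (* each [q_i] induces a complete graph K_{|[q_i]|} *)
  (forall i (x y : blowup k), inQ i x -> inQ i y -> x <> y -> adj2 x y) /\
  (* no edges between distinct components among H, [q_1], ..., [q_n] *)
  (forall x y : blowup k, adj2 x y -> forall i, inQ i x <-> inQ i y) /\
  (* H, induced on V \ U_i [q_i], is connected *)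
  (forall x y : blowup k, inH x -> inH y -> clos_refl_trans _ (@adjH n k) x y).
Proof.
have n_gt1 : 1 < n by apply: ltnW.
split; first by move=> i y; apply: inQ_isV.
split; first exact: inQ_inj hk.
split; first by move=> i x y; apply: inQ_adj2.
split; first by move=> x y xy i; apply: adj2_inQ.
by move=> x y; apply: inH_connected.
Qed.
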